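(* Let $m_1,m_2,n_1\in\mathbb Z_+$. Then $$|\mathcal T(m_1,m_2,n_1)|=|\mathcal T(m_1-1,m_2,n_1-1)|+|\mathcal T^1(m_1+1,m_2-1,n_1-1)|+|\mathcal T^2(m_1-1,m_2,n_1-1)|+|\mathcal T^3(m_1,m_2,n_1)|.$$
   Context: (Type $G_2$ with $\mu(h_2)=0$: here $m_i=\lambda(h_i)$, $n_1=\mu(h_1)$, and shifting $\lambda\mapsto\lambda\pm\varpi_i$, $\mu\mapsto\mu-\varpi_1$ shifts the parameters accordingly.) For arbitrary integers $m_1,m_2,n_1$ define: $\mathcal T(m_1,m_2,n_1)=\{(a,b,c,d,e,f)\in\mathbb Z_+^6: a+b+c+d+e+f\le n_1,\ c\le1,\ b+e-d\le m_2,\ f\le m_1,\ e\le m_2,\ a-2b+2d-e+f\le m_1,\ c+f+2d-e\le m_1\}$; $\mathcal T^1(m_1,m_2,n_1)=\{(a,b,c,d,e)\in\mathbb Z_+^5: a+b+c+d+e\le n_1,\ c\le1,\ b+e-d\le m_2,\ e\le m_2,\ a-2b+2d-e\le m_1,\ c+2d-e\le m_1\}$; $\mathcal T^2(m_1,m_2,n_1)=\{(a,b,c,y)\in\mathbb Z_+^4: a+2b+c+y\le n_1+m_2,\ c\le1,\ a+2y\le m_1+2m_2,\ c+2b+2y\le m_1+2m_2,\ y+b\ge m_2\}$; $\mathcal T^3(m_1,m_2,n_1)=\{(a,b,c,y)\in\mathcal T^2(m_1,m_2,n_1): a=0\ \text{or}\ c+2b+2y=m_1+2m_2\}$. *)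

From mathcomp Require Import all_boot all_algebra.
Set Implicit Arguments. Unset Strict Implicit. Unset Printing Implicit Defensive.
Import GRing.Theory Num.Theory.
Local Open Scope ring_scope.

Definition inT (m1 m2 n1 : int) (a b c d e f : nat) : bool :=
  [&& (a + b + c + d + e + f)%:Z <= n1, (c <= 1)%N,
      b%:Z + e%:Z - d%:Z <= m2, f%:Z <= m1, e%:Z <= m2,
      a%:Z - 2 * b%:Z + 2 * d%:Z - e%:Z + f%:Z <= m1 &
      c%:Z + f%:Z + 2 * d%:Z - e%:Z <= m1].

Definition inT1 (m1 m2 n1 : int) (a b c d e : nat) : bool :=
  [&& (a + b + c + d + e)%:Z <= n1, (c <= 1)%N,
      b%:Z + e%:Z - d%:Z <= m2, e%:Z <= m2,
      a%:Z - 2 * b%:Z + 2 * d%:Z - e%:Z <= m1 &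
      c%:Z + 2 * d%:Z - e%:Z <= m1].

Definition inT2 (m1 m2 n1 : int) (a b c y : nat) : bool :=
  [&& (a + 2 * b + c + y)%:Z <= n1 + m2, (c <= 1)%N,
      (a + 2 * y)%:Z <= m1 + 2 * m2,
      (c + 2 * b + 2 * y)%:Z <= m1 + 2 * m2 &
      m2 <= (y + b)%:Z].

Definition inT3 (m1 m2 n1 : int) (a b c y : nat) : bool :=
  inT2 m1 m2 n1 a b c y &&
  ((a == 0)%N || ((c + 2 * b + 2 * y)%:Z == m1 + 2 * m2)).

(* Every element of T, T^1 (all coordinates <= sum <= n1)
   and of T^2, T^3 (all coordinates <= a+2b+c+y <= n1+m2) has all coordinates
   < bnd m1 m2 n1 = |n1|+|m2|+1, so the finset cut out of the box 'I_bnd^k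
   is exactly the set in question and #| | is its cardinality. *)
Definition bnd (m1 m2 n1 : int) : nat := (`|n1| + `|m2| + 1)%N.

Definition cardTT (m1 m2 n1 : int) : nat :=
  let N := bnd m1 m2 n1 in
  #|[set x : 'I_N * 'I_N * 'I_N * 'I_N * 'I_N * 'I_N |
      let: (a, b, c, d, e, f) := x in inT m1 m2 n1 a b c d e f]|.

Definition cardTT1 (m1 m2 n1 : int) : nat :=
  let N := bnd m1 m2 n1 in
  #|[set x : 'I_N * 'I_N * 'I_N * 'I_N * 'I_N |
      let: (a, b, c, d, e) := x in inT1 m1 m2 n1 a b c d e]|.

Definition cardTT2 (m1 m2 n1 : int) : nat :=
  let N := bnd m1 m2 n1 in
  #|[set x : 'I_N * 'I_N * 'I_N * 'I_N |
      let: (a, b, c, y) := x in inT2 m1 m2 n1 a b c y]|.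

Definition cardTT3 (m1 m2 n1 : int) : nat :=
  let N := bnd m1 m2 n1 in
  #|[set x : 'I_N * 'I_N * 'I_N * 'I_N |
      let: (a, b, c, y) := x in inT3 m1 m2 n1 a b c y]|.

From mathcomp Require Import all_boot all_algebra zify.
Import GRing.Theory Num.Theory.

(* Proof of the recursion
     |T(m1,m2,n1)| = |T(m1-1,m2,n1-1)| + |T^1(m1+1,m2-1,n1-1)|
                     + |T^2(m1-1,m2,n1-1)| + |T^3(m1,m2,n1)|
   by peeling off coordinates one at a time.
   - Points of T with f >= 1 correspond, via f |-> f-1, to T(m1-1,m2,n1-1);
     the rest is the slice f = 0.
   - In that slice, points with e >= 1 correspond, via e |-> e-1, to
     T^1(m1+1,m2-1,n1-1); the rest is the face F(m1,m2,n1) where e = f = 0.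
   - Points of the face with a >= 1 and c+2d <> m1 correspond, via a |-> a-1,
     to F(m1-1,m2,n1-1); the others satisfy the "tight" condition
     a = 0 or c+2d = m1.
   - The unimodular substitution d + m2 = y + b maps F(M1,m2,N1) onto
     T^2(M1,m2,N1), and its tight part onto T^3(M1,m2,N1). *)

Local Open Scope nat_scope.

Definition count4 K (P : nat -> nat -> nat -> nat -> bool) : nat :=
  \sum_(a < K) \sum_(b < K) \sum_(c < K) \sum_(d < K) P a b c d.
Definition count5 K (P : nat -> nat -> nat -> nat -> nat -> bool) : nat :=
  \sum_(a < K) \sum_(b < K) \sum_(c < K) \sum_(d < K) \sum_(e < K) P a b c d e.
Definition count6 K (P : nat -> nat -> nat -> nat -> nat -> nat -> bool) : nat :=
  \sum_(a < K) \sum_(b < K) \sum_(c < K) \sum_(d < K) \sum_(e < K) \sum_(f < K)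
    P a b c d e f.

Lemma card_set_sum (T : finType) (Q : pred T) : #|[set u | Q u]| = \sum_u Q u.
Proof.
by rewrite -sum1_card big_mkcond /=; apply: eq_bigr => u _; rewrite inE; case: (Q u).
Qed.

Lemma sum_pair (X Y : finType) (G : X * Y -> nat) :
  \sum_p G p = \sum_(x : X) \sum_(y : Y) G (x, y).
Proof. by rewrite pair_big; apply: eq_bigr => -[]. Qed.

Lemma card_transport (T U : finType) (g : T -> U) (P : pred T) (Q : pred U) :
  injective g -> (forall t, P t = Q (g t)) -> (forall u, Q u -> u \in codom g) ->
  #|[set t | P t]| = #|[set u | Q u]|.
Proof.
move=> g_inj PQ Qg; rewrite -(card_imset _ g_inj); apply: eq_card => u.
apply/imsetP/idP => [[t]|]; first by rewrite !inE PQ => ? ->.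
rewrite inE => Qu; have /codomP[t ut] := Qg u Qu.
by exists t; rewrite // inE PQ -ut.
Qed.

Lemma card_box6 N K (P : nat -> nat -> nat -> nat -> nat -> nat -> bool) :
  N <= K -> (forall a b c d e f, P a b c d e f ->
     [&& a < N, b < N, c < N, d < N, e < N & f < N]) ->
  #|[set x : 'I_N * 'I_N * 'I_N * 'I_N * 'I_N * 'I_N |
      let: (a, b, c, d, e, f) := x in P a b c d e f]| = count6 K P.
Proof.
move=> NK Pbnd; pose w := widen_ord NK.
rewrite (@card_transport _ _ (fun '(a, b, c, d, e, f) => (w a, w b, w c, w d, w e, w f))
  _ (fun '(a, b, c, d, e, f) => P a b c d e f)).
- by rewrite card_set_sum !sum_pair.
- move=> [[[[[a b] c] d] e] f] [[[[[a' b'] c'] d'] e'] f'] /=.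
  by case=> /val_inj-> /val_inj-> /val_inj-> /val_inj-> /val_inj-> /val_inj->.
- by move=> [[[[[a b] c] d] e] f].
move=> [[[[[a b] c] d] e] f] /Pbnd /and5P[ha hb hc hd /andP[he hf]].
apply/codomP; exists (Ordinal ha, Ordinal hb, Ordinal hc, Ordinal hd, Ordinal he, Ordinal hf).
by congr (_, _, _, _, _, _); apply: val_inj.
Qed.

Lemma card_box5 N K (P : nat -> nat -> nat -> nat -> nat -> bool) :
  N <= K -> (forall a b c d e, P a b c d e ->
     [&& a < N, b < N, c < N, d < N & e < N]) ->
  #|[set x : 'I_N * 'I_N * 'I_N * 'I_N * 'I_N |
      let: (a, b, c, d, e) := x in P a b c d e]| = count5 K P.
Proof.
move=> NK Pbnd; pose w := widen_ord NK.
rewrite (@card_transport _ _ (fun '(a, b, c, d, e) => (w a, w b, w c, w d, w e))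
  _ (fun '(a, b, c, d, e) => P a b c d e)).
- by rewrite card_set_sum !sum_pair.
- move=> [[[[a b] c] d] e] [[[[a' b'] c'] d'] e'] /=.
  by case=> /val_inj-> /val_inj-> /val_inj-> /val_inj-> /val_inj->.
- by move=> [[[[a b] c] d] e].
move=> [[[[a b] c] d] e] /Pbnd /and5P[ha hb hc hd he].
apply/codomP; exists (Ordinal ha, Ordinal hb, Ordinal hc, Ordinal hd, Ordinal he).
by congr (_, _, _, _, _); apply: val_inj.
Qed.

Lemma card_box4 N K (P : nat -> nat -> nat -> nat -> bool) :
  N <= K -> (forall a b c d, P a b c d -> [&& a < N, b < N, c < N & d < N]) ->
  #|[set x : 'I_N * 'I_N * 'I_N * 'I_N |
      let: (a, b, c, d) := x in P a b c d]| = count4 K P.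
Proof.
move=> NK Pbnd; pose w := widen_ord NK.
rewrite (@card_transport _ _ (fun '(a, b, c, d) => (w a, w b, w c, w d))
  _ (fun '(a, b, c, d) => P a b c d)).
- by rewrite card_set_sum !sum_pair.
- move=> [[[a b] c] d] [[[a' b'] c'] d'] /=.
  by case=> /val_inj-> /val_inj-> /val_inj-> /val_inj->.
- by move=> [[[a b] c] d].
move=> [[[a b] c] d] /Pbnd /and4P[ha hb hc hd].
apply/codomP; exists (Ordinal ha, Ordinal hb, Ordinal hc, Ordinal hd).
by congr (_, _, _, _); apply: val_inj.
Qed.

Lemma sum_peel k (G : nat -> nat) :
  G k.+1 = 0 -> \sum_(i < k.+1) G i = G 0 + \sum_(i < k.+1) G i.+1.
Proof. by move=> Gk; rewrite big_ord_recl big_ord_recr /= Gk addn0. Qed.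

Lemma sum_shift K s (G : nat -> nat) :
  (forall i, i < s -> G i = 0) -> (forall i, K <= i -> G i = 0) ->
  \sum_(i < K) G i = \sum_(i < K) G (i + s).
Proof.
move=> G0 GK.
rewrite -(big_mkord xpredT G) -(big_mkord xpredT (fun i => G (i + s))).
have -> : \sum_(0 <= i < K) G (i + s) = \sum_(s <= i < K + s) G i.
  by rewrite -[X in \sum_(X <= _ < K + s) _](add0n s) big_addn addnK.
transitivity (\sum_(0 <= i < K + s) G i).
  rewrite [RHS](big_cat_nat _ (n := K)) ?leq_addr //= [X in _ + X]big1_seq ?addn0 //.
  by move=> i /=; rewrite mem_index_iota => /andP[hi _]; apply: GK.
rewrite (big_cat_nat _ (n := s)) ?leq_addl //= big1_seq ?add0n //.
by move=> i /=; rewrite mem_index_iota => /andP[_ hi]; apply: G0.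
Qed.

Lemma sum_translate K s t (F G : nat -> nat) :
  (forall i, i < s -> F i = 0) -> (forall j, j < t -> G j = 0) ->
  (forall i, K <= i -> F i = 0) -> (forall j, K <= j -> G j = 0) ->
  (forall i, F (i + s) = G (i + t)) ->
  \sum_(i < K) F i = \sum_(j < K) G j.
Proof.
move=> F0 G0 FK GK FG; rewrite (@sum_shift K s F F0 FK) (@sum_shift K t G G0 GK).
by apply: eq_bigr => i _; rewrite FG.
Qed.

Lemma count6_peel_last k (P Q : nat -> nat -> nat -> nat -> nat -> nat -> bool)
    (R : nat -> nat -> nat -> nat -> nat -> bool) :
  (forall a b c d e, P a b c d e 0 = R a b c d e) ->
  (forall a b c d e f, P a b c d e f.+1 = Q a b c d e f) ->
  (forall a b c d e, Q a b c d e k = false) ->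
  count6 k.+1 P = count5 k.+1 R + count6 k.+1 Q.
Proof.
move=> PR PQ Qk; rewrite /count6 /count5.
rewrite -big_split; apply: eq_bigr => a _; rewrite -big_split; apply: eq_bigr => b _.
rewrite -big_split; apply: eq_bigr => c _; rewrite -big_split; apply: eq_bigr => d _.
rewrite -big_split; apply: eq_bigr => e _.
rewrite (@sum_peel k (fun f => P a b c d e f)) ?PQ ?Qk // PR; congr (_ + _).
by apply: eq_bigr => f _; rewrite PQ.
Qed.

Lemma count5_peel_last k (P Q : nat -> nat -> nat -> nat -> nat -> bool)
    (R : nat -> nat -> nat -> nat -> bool) :
  (forall a b c d, P a b c d 0 = R a b c d) ->
  (forall a b c d e, P a b c d e.+1 = Q a b c d e) ->
  (forall a b c d, Q a b c d k = false) ->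
  count5 k.+1 P = count4 k.+1 R + count5 k.+1 Q.
Proof.
move=> PR PQ Qk; rewrite /count5 /count4.
rewrite -big_split; apply: eq_bigr => a _; rewrite -big_split; apply: eq_bigr => b _.
rewrite -big_split; apply: eq_bigr => c _; rewrite -big_split; apply: eq_bigr => d _.
rewrite (@sum_peel k (fun e => P a b c d e)) ?PQ ?Qk // PR; congr (_ + _).
by apply: eq_bigr => e _; rewrite PQ.
Qed.

Lemma count4_peel_first k (P Q : nat -> nat -> nat -> nat -> bool) :
  (forall b c d, P 0 b c d = false) ->
  (forall a b c d, P a.+1 b c d = Q a b c d) ->
  (forall b c d, Q k b c d = false) ->
  count4 k.+1 P = count4 k.+1 Q.
Proof.
move=> P0 PQ Qk; rewrite /count4 (@sum_peel k (fun a =>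
  \sum_(b < k.+1) \sum_(c < k.+1) \sum_(d < k.+1) P a b c d)) /=; last first.
  by do 3 (rewrite big1 // => ? _); rewrite PQ Qk.
rewrite [X in X + _]big1 ?add0n => [|b _]; last by do 2 (rewrite big1 // => ? _); rewrite P0.
by do 4 (apply: eq_bigr => ? _); rewrite PQ.
Qed.

Lemma count4_split K (C P : nat -> nat -> nat -> nat -> bool) :
  count4 K P = count4 K (fun a b c d => ~~ C a b c d && P a b c d)
             + count4 K (fun a b c d => C a b c d && P a b c d).
Proof.
rewrite /count4; do 4 (rewrite -big_split; apply: eq_bigr => ? _).
by case: (C _ _ _ _); case: (P _ _ _ _).
Qed.

(* The face e = f = 0 of T, viewed as a subset of Z_+^4. *)
Definition inFace (m1 m2 n1 : int) (a b c d : nat) : bool := inT1 m1 m2 n1 a b c d 0.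

Definition tight (m1 : int) (a c d : nat) : bool := (a == 0) || ((c + 2 * d)%:Z == m1)%R.

Section DefiningInequalities.
Local Open Scope ring_scope.

Lemma inT_succ_f (m1 m2 n1 : int) (a b c d e f : nat) :
  inT m1 m2 n1 a b c d e f.+1 = inT (m1 - 1) m2 (n1 - 1) a b c d e f.
Proof. rewrite /inT; lia. Qed.

Lemma inT_succ_e (m1 m2 n1 : int) (a b c d e : nat) : 0 <= m1 ->
  inT m1 m2 n1 a b c d e.+1 0 = inT1 (m1 + 1) (m2 - 1) (n1 - 1) a b c d e.
Proof. rewrite /inT /inT1; lia. Qed.

(* The slice e = f = 0 of T is the face (the constraint f <= m1 becomes 0 <= m1). *)
Lemma inT_face (m1 m2 n1 : int) (a b c d : nat) : 0 <= m1 ->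
  inT m1 m2 n1 a b c d 0 0 = inFace m1 m2 n1 a b c d.
Proof. rewrite /inT /inFace /inT1; lia. Qed.

Lemma inFace_succ_a (m1 m2 n1 : int) (a b c d : nat) :
  ~~ tight m1 a.+1 c d && inFace m1 m2 n1 a.+1 b c d
  = inFace (m1 - 1) m2 (n1 - 1) a b c d.
Proof. rewrite /tight /inFace /inT1; lia. Qed.

Lemma inFace_inT2 (m1 n1 : int) (m2 a b c d y : nat) : (d + m2 = y + b)%N ->
  inFace m1 m2 n1 a b c d = inT2 m1 m2 n1 a b c y.
Proof. rewrite /inFace /inT1 /inT2; lia. Qed.

Lemma inT3_tight (m1 n1 : int) (m2 a b c d y : nat) : (d + m2 = y + b)%N ->
  tight m1 a c d && inFace m1 m2 n1 a b c d = inT3 m1 m2 n1 a b c y.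
Proof. move=> dy; rewrite /inT3 -(@inFace_inT2 m1 n1 m2 a b c d y dy) /tight; lia. Qed.

End DefiningInequalities.

Lemma count4_face_T2 K (m1 n1 : int) (m2 : nat) (P Q : nat -> nat -> nat -> nat -> bool) :
  (n1 + m2%:Z < K%:Z)%R ->
  (forall a b c d, P a b c d -> inFace m1 m2 n1 a b c d) ->
  (forall a b c y, Q a b c y -> inT2 m1 m2 n1 a b c y) ->
  (forall a b c d y, d + m2 = y + b -> P a b c d = Q a b c y) ->
  count4 K P = count4 K Q.
Proof.
move=> hK PF QT PQ; rewrite /count4.
apply: eq_bigr => a _; apply: eq_bigr => b _; apply: eq_bigr => c _.
have Pfalse d : ~~ inFace m1 m2 n1 a b c d -> P a b c d = false.
  by apply: contraNF; apply: PF.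
have Qfalse y : ~~ inT2 m1 m2 n1 a b c y -> Q a b c y = false.
  by apply: contraNF; apply: QT.
apply: (@sum_translate K (b - m2) (m2 - b) (fun d => P a b c d) (fun y => Q a b c y))
  => [d hd|y hy|d hd|y hy|i] /=.
1,3: by rewrite Pfalse // /inFace /inT1; lia.
1,2: by rewrite Qfalse // /inT2; lia.
by rewrite (PQ _ _ _ _ (i + (m2 - b))) //; lia.
Qed.

Local Open Scope ring_scope.

Theorem lemma6p4 (m1 m2 n1 : nat) :
  cardTT m1%:Z m2%:Z n1%:Z =
  (cardTT (m1%:Z - 1) m2%:Z (n1%:Z - 1)
   + cardTT1 (m1%:Z + 1) (m2%:Z - 1) (n1%:Z - 1)
   + cardTT2 (m1%:Z - 1) m2%:Z (n1%:Z - 1)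
   + cardTT3 m1%:Z m2%:Z n1%:Z)%N.
Proof.
(* All five sets lie in the box [0,K)^k, with K = n1 + m2 + 4. *)
set k := (n1 + m2 + 3)%N; set K := k.+1.
rewrite /cardTT /cardTT1 /cardTT2 /cardTT3 /=.
rewrite !(@card_box6 _ K) ?(@card_box5 _ K) ?(@card_box4 _ K);
  try by rewrite /inT3 /inT2 /inT1 /inT /bnd => *; lia.
pose slice_f0 a b c d e := inT m1 m2 n1 a b c d e 0%N.
have split_f : count6 K (inT m1 m2 n1)
    = (count5 K slice_f0 + count6 K (inT (m1%:Z - 1) m2 (n1%:Z - 1)))%N.
  apply: count6_peel_last => // *; [exact: inT_succ_f | rewrite /inT; lia].
have split_e : count5 K slice_f0
    = (count4 K (inFace m1 m2 n1) + count5 K (inT1 (m1%:Z + 1) (m2%:Z - 1) (n1%:Z - 1)))%N.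
  apply: count5_peel_last => *; [exact: inT_face | exact: inT_succ_e | rewrite /inT1; lia].
have split_a : count4 K (inFace m1 m2 n1)
    = (count4 K (inFace (m1%:Z - 1) m2 (n1%:Z - 1))
       + count4 K (fun a b c d => tight m1 a c d && inFace m1 m2 n1 a b c d))%N.
  rewrite (@count4_split K (fun a _ c d => tight m1 a c d)); congr (_ + _)%N.
  apply: count4_peel_first => // *; [exact: inFace_succ_a | rewrite /inFace /inT1; lia].
have face_T2 : count4 K (inFace (m1%:Z - 1) m2 (n1%:Z - 1))
    = count4 K (inT2 (m1%:Z - 1) m2 (n1%:Z - 1)).
  apply: (@count4_face_T2 K (m1%:Z - 1) (n1%:Z - 1) m2) => // [|*]; [lia | exact: inFace_inT2].
have tight_T3 : count4 K (fun a b c d => tight m1 a c d && inFace m1 m2 n1 a b c d)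
    = count4 K (inT3 m1 m2 n1).
  apply: (@count4_face_T2 K m1 n1 m2) => [|a b c d /andP[]|a b c y /andP[]|*] //.
  - by lia.
  - exact: inT3_tight.
rewrite split_f split_e split_a face_T2 tight_T3; lia.
Qed.
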